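(* Let $X$ be a Hausdorff topological space. Then $X$ is locally compact if and only if its symmetric pseudogroup $\mathscr{I}(X)$ is continuous.
   Context: The symmetric pseudogroup $\mathscr{I}(X)$ is the set of all homeomorphisms $f:U\to V$ between open subsets $U=\mathrm{dom}(f)$ and $V$ of $X$, with product: for $f:U\to V$ and $f_1:U_1\to V_1$, $f_1\cdot f : x\mapsto f_1(f(x))$ defined on $f^{-1}(V\cap U_1)$ with values in $f_1(V\cap U_1)$; it is an inverse semigroup with $f^*=f^{-1}$. Its intrinsic order is $f\leqslant g$ iff $f=g|_U$ for some open $U\subseteq\mathrm{dom}(g)$. In a poset, $x$ is way-below $y$ ($x\ll y$) if for every directed subset $D$ (nonempty, any two elements having an upper bound in $D$) that has a supremum with $y\leqslant\sup D$, there is $d\in D$ with $x\leqslant d$. A poset is continuous if for every $s$ the set $\{t: t\ll s\}$ is directed with supremum $s$; $\mathscr{I}(X)$ is continuous if it is so for its intrinsic order. *)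

From HB Require Import structures.
From mathcomp Require Import all_boot all_order.
From mathcomp Require Import all_classical all_reals all_analysis.
Set Implicit Arguments. Unset Strict Implicit. Unset Printing Implicit Defensive.
Local Open Scope classical_set_scope.

(* An element of the symmetric pseudogroup I(X): a homeomorphism f : U -> V
   between open subsets U = pdom f and V = f @` U of X.  It is represented by a
   total map X -> X; to get a canonical representative we require f x = x
   outside U (this field carries no mathematical content). *)
Record phomeo (X : topologicalType) := PHomeo {
  pdom : set X;
  pmap : X -> X;
  pinv : X -> X;
  pdom_open : open pdom;
  pimg_open : open (pmap @` pdom);
  pinvK : forall x, pdom x -> pinv (pmap x) = x;
  pmapK : forall y, (pmap @` pdom) y -> pmap (pinv y) = y;
  pinv_img : forall y, (pmap @` pdom) y -> pdom (pinv y);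
  pmap_cont : {within pdom, continuous pmap};
  pinv_cont : {within pmap @` pdom, continuous pinv};
  pmap_out : forall x, ~ pdom x -> pmap x = x
}.

(* intrinsic order: f <= g iff f = g|_U for some open U ⊆ dom g,
   i.e. (since dom f is open) dom f ⊆ dom g and f, g agree on dom f *)
Definition ple (X : topologicalType) (f g : phomeo X) : Prop :=
  pdom f `<=` pdom g /\ forall x, pdom f x -> pmap f x = pmap g x.

Section Poset.
Variables (T : Type) (le : T -> T -> Prop).

Definition directed (D : set T) : Prop :=
  (exists d, D d) /\
  forall a b, D a -> D b -> exists2 c, D c & le a c /\ le b c.

Definition is_sup (D : set T) (s : T) : Prop :=
  (forall d, D d -> le d s) /\
  (forall u, (forall d, D d -> le d u) -> le s u).

Definition way_below (x y : T) : Prop :=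
  forall D s, directed D -> is_sup D s -> le y s ->
  exists2 d, D d & le x d.

Definition continuous_poset : Prop :=
  forall s, directed [set t | way_below t s] /\
            is_sup [set t | way_below t s] s.
End Poset.

From Pilot Require Import Defs.
From HB Require Import structures.
From mathcomp Require Import all_boot all_order.
From mathcomp Require Import all_classical all_reals all_analysis.
(* [seq.pmap] from [all_boot] would otherwise shadow the field [pmap]. *)
Import Defs.
Set Implicit Arguments. Unset Strict Implicit. Unset Printing Implicit Defensive.
Local Open Scope classical_set_scope.

(** Both directions pass through the way-below relation of the frame of open
    sets: say that [V] is compactly below [U] when every directed open cover
    of [U] has a single member containing [V].  If [t << s] in the intrinsic
    order, then [dom t] is compactly below [dom s], since the restrictions of
    [s] to the members of a directed open cover of [dom s] form a directed set
    with supremum [s]; conversely, [t <= s] with a compact set between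
    [dom t] and [dom s] gives [t << s].  In a locally compact Hausdorff space
    every point of [dom s] lies in an open set with compact closure inside
    [dom s], whose restriction of [s] is way below [s]: this makes
    [I(X)] continuous.  Conversely, continuity yields [t1 << t0 << id] with [x]
    in [dom t1]; Hausdorffness forces the closure of [dom t1] into [dom t0],
    and [dom t0] being compactly below [X] makes that closure compact. *)

Section CompactlyBelow.
Variable X : topologicalType.
Implicit Types (K U V : set X) (W : set (set X)).

Definition compactly_below V U := forall W,
  directed (@subset X) W -> (forall w, W w -> open w) ->
  U `<=` \bigcup_(w in W) w -> exists2 w, W w & V `<=` w.

Lemma compact_compactly_below K : compact K -> compactly_below K K.
Proof.
move=> cK W [[w0 Ww0] dirW] oW covK.
pose F := filter_from W (fun a => [set c | W c /\ a `<=` c]).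
have FF : Filter F.
  apply: filter_from_filter; first by exists w0.
  move=> a b Wa Wb; have [c Wc [ac bc]] := dirW a b Wa Wb.
  by exists c => // d [Wd cd]; do 2 split => //; apply: subset_trans cd.
have [x Kx|a Wa aK] := (compact_near_coveringP K).1 cK (set X) F (fun w x => w x) FF.
  have [w Ww wx] := covK x Kx.
  exists (w, [set c | W c /\ w `<=` c]) => /=; last by move=> [y c] /= [wy [_]]; apply.
  by split; [apply: open_nbhs_nbhs; split => //; exact: oW | exists w].
by exists a => //; apply: aK; split.
Qed.

Lemma compactly_below_closure V U : hausdorff_space X ->
  compactly_below V U -> closure V `<=` U.
Proof.
move=> hX cbVU z clVz; apply: contrapT => Uz.
pose W := [set w : set X | open w /\
  exists B, [/\ open B, B z & w `&` B = set0]].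
have [w [_ [B [oB Bz wB0]]] Vw] : exists2 w, W w & V `<=` w.
  apply: cbVU => [|w []//|u Uu].
  - split=> [|a b [oa [Ba [oBa Baz aBa]]] [ob [Bb [oBb Bbz bBb]]]].
      exists set0; split; first exact: open0.
      by exists setT; split; [exact: openT | by [] | exact: set0I].
    exists (a `|` b); last by split=> y; [left|right].
    split; first exact: openU.
    exists (Ba `&` Bb); split; [exact: openI | by [] |].
    apply/seteqP; split=> // y [[ay|by'] [Bay Bby]];
      [rewrite -aBa | rewrite -bBb]; by split.
  - have uz : u != z by apply/eqP => uz; apply: Uz; rewrite -uz.
    move: hX; rewrite open_hausdorff => /(_ u z uz).
    move=> [[P Q] [/= /set_mem Pu /set_mem Qz] [oP oQ /eqP PQ]].
    by exists P => //; split => //; exists Q.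
have [y [Vy By]] := clVz B (open_nbhs_nbhs (conj oB Bz)).
suff : (w `&` B) y by rewrite wB0.
by split => //; exact: Vw.
Qed.

Lemma closed_compactly_belowT U C :
  compactly_below U setT -> closed C -> C `<=` U -> compact C.
Proof.
move=> cbU clC CU; apply/compact_near_coveringP => I F P FF covC.
pose W := [set w : set X | open w /\
  \forall i \near F, forall y, w y -> C y -> P i y].
have oCC : open (~` C) by exact: closed_openC.
have [w [_ nw] Uw] : exists2 w, W w & U `<=` w.
  apply: cbU => [|w []//|y _].
  - split=> [|a b [oa na] [ob nb]].
      by exists (~` C); split => //; apply: filterE => i y.
    exists (a `|` b); last by split=> y; [left|right].
    split; first exact: openU.
    near=> i => y [ay|by'] Cy; [exact: (near na i) | exact: (near nb i)].
  - have [Cy|nCy] := pselect (C y); last first.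
      by exists (~` C) => //; split => //; apply: filterE => i y'.
    have [[N S] /= [Ny FS] NS] := covC y Cy.
    exists (interior N); last exact: Ny.
    split; first exact: open_interior.
    by apply: filterS FS => i Si y' /interior_subset Ny' _; exact: (NS (y', i)).
by apply: filterS nw => i h y Cy; apply: h => //; apply: Uw; exact: CU.
Unshelve. all: by end_near.
Qed.

Lemma locally_compact_open_nbhs_compact (O : set X) x :
  hausdorff_space X -> locally_compact [set: X] -> open O -> O x ->
  exists A K, [/\ open A, A x, compact K, A `<=` K & K `<=` O].
Proof.
move=> hX lcX oO Ox.
have [B] := lcX x I; rewrite withinET => Bx [cB clB].
have [N Nx clNO] := compact_regular hX cB Bx (open_nbhs_nbhs (conj oO Ox)).
exists (interior (N `&` B)), (closure (N `&` B)); split.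
- exact: open_interior.
- exact: filterI.
- apply: (subclosed_compact _ cB); first exact: closed_closure.
  rewrite [Y in _ `<=` Y](closure_id B).1 //; apply: closureS; exact: subIsetr.
- by move=> y /interior_subset; exact: subset_closure.
- by apply: subset_trans clNO; apply: closureS; exact: subIsetl.
Qed.

Lemma compactly_below_compact_between V U :
  hausdorff_space X -> locally_compact [set: X] -> open U ->
  compactly_below V U -> exists K, [/\ compact K, V `<=` K & K `<=` U].
Proof.
move=> hX lcX oU cbVU.
pose W := [set A | open A /\ exists K, [/\ compact K, A `<=` K & K `<=` U]].
have [A [_ [K [cK AK KU]]] VA] : exists2 A, W A & V `<=` A.
  apply: cbVU => [|A []//|x Ux].
  - split=> [|A1 A2 [oA1 [K1 [cK1 A1K1 K1U]]] [oA2 [K2 [cK2 A2K2 K2U]]]].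
      by exists set0; split; [exact: open0 | exists set0; split=> //; exact: compact0].
    exists (A1 `|` A2); last by split=> y; [left|right].
    split; first exact: openU.
    exists (K1 `|` K2); split; first exact: compactU.
      by move=> y [/A1K1|/A2K2] ?; [left|right].
    by move=> y [/K1U|/K2U].
  - have [A [K [oA Ax cK AK KU]]] := locally_compact_open_nbhs_compact hX lcX oU Ux.
    by exists A => //; split => //; exists K.
by exists K; split => //; apply: subset_trans AK.
Qed.

End CompactlyBelow.

Section Restriction.
Variable X : topologicalType.
Implicit Types (s t : phomeo X) (A : set X).

Lemma ple_refl s : ple s s. Proof. by split. Qed.

Definition resmap s A x := if pselect ((pdom s `&` A) x) then pmap s x else x.

Definition resinv s A y :=
  if pselect ((pmap s @` (pdom s `&` A)) y) then pinv s y else y.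

Lemma resmapE s A x : (pdom s `&` A) x -> resmap s A x = pmap s x.
Proof. by rewrite /resmap; case: pselect. Qed.

Lemma resinvE s A y : (pmap s @` (pdom s `&` A)) y -> resinv s A y = pinv s y.
Proof. by rewrite /resinv; case: pselect. Qed.

Lemma resmap_out s A x : ~ (pdom s `&` A) x -> resmap s A x = x.
Proof. by rewrite /resmap; case: pselect. Qed.

Lemma image_resmap s A :
  resmap s A @` (pdom s `&` A) = pmap s @` (pdom s `&` A).
Proof. by apply/seteqP; split=> _ [x Ax <-]; exists x => //; rewrite resmapE. Qed.

Lemma open_pdomI s A : open A -> open (pdom s `&` A).
Proof. by move=> oA; apply: openI => //; exact: pdom_open. Qed.

Lemma open_image_resmap s A : open A -> open (resmap s A @` (pdom s `&` A)).
Proof.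
move=> oA; rewrite image_resmap.
suff -> : pmap s @` (pdom s `&` A) = pmap s @` pdom s `&` pinv s @^-1` (pdom s `&` A).
  move: (@pinv_cont _ s); rewrite continuous_open_subspace; last exact: pimg_open.
  by move/(continuous_inP _ (pimg_open s)); apply; exact: open_pdomI.
apply/seteqP; split=> [_ [x [sx Ax] <-]|y [sy Dy]].
  by split; [exists x | rewrite /= pinvK].
by exists (pinv s y) => //; exact: pmapK.
Qed.

Lemma resinvK s A x : (pdom s `&` A) x -> resinv s A (resmap s A x) = x.
Proof.
by move=> Dx; rewrite resmapE // resinvE; [apply: pinvK; case: Dx | exists x].
Qed.

Lemma resmapK s A y :
  (resmap s A @` (pdom s `&` A)) y -> resmap s A (resinv s A y) = y.
Proof.
rewrite image_resmap => -[x Dx <-]; rewrite resinvE; last by exists x.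
by rewrite pinvK ?resmapE //; case: Dx.
Qed.

Lemma resinv_image s A y :
  (resmap s A @` (pdom s `&` A)) y -> (pdom s `&` A) (resinv s A y).
Proof.
rewrite image_resmap => -[x Dx <-]; rewrite resinvE; last by exists x.
by rewrite pinvK //; case: Dx.
Qed.

Lemma resmap_cont s A : {within pdom s `&` A, continuous resmap s A}.
Proof.
apply: (@subspace_eq_continuous _ _ _ (pmap s)).
  by move=> x; rewrite inE => Dx; rewrite /from_subspace resmapE.
exact: continuous_subspaceW (@subIsetl _ _ _) (@pmap_cont _ s).
Qed.

Lemma resinv_cont s A :
  {within resmap s A @` (pdom s `&` A), continuous resinv s A}.
Proof.
rewrite image_resmap; apply: (@subspace_eq_continuous _ _ _ (pinv s)).
  by move=> y; rewrite inE => Dy; rewrite /from_subspace resinvE.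
by apply: continuous_subspaceW (@pinv_cont _ s) => _ [x [sx _] <-]; exists x.
Qed.

Definition res s A (oA : open A) : phomeo X :=
  PHomeo (open_pdomI s oA) (open_image_resmap s oA) (@resinvK s A)
    (@resmapK s A) (@resinv_image s A) (@resmap_cont s A) (@resinv_cont s A)
    (@resmap_out s A).

Lemma ple_res s A (oA : open A) : ple (res s oA) s.
Proof. by split=> [|x Dx]; [exact: subIsetl | exact: resmapE]. Qed.

Lemma ple_res_sub t s A (oA : open A) :
  ple t s -> pdom t `<=` A -> ple t (res s oA).
Proof.
move=> [ts ets] tA; split=> [x tx|x tx]; first by split; [exact: ts | exact: tA].
by rewrite ets // /= resmapE //; split; [exact: ts | exact: tA].
Qed.

Lemma open_image_idT : open (id @` [set: X]).
Proof. by rewrite image_id; exact: openT. Qed.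

Lemma within_continuous_id (A : set X) : {within A, continuous id}.
Proof.
apply: continuous_subspaceW (subsetT A) _.
by apply: continuous_subspaceT => x; exact: cvg_id.
Qed.

Definition phomeo_id : phomeo X :=
  PHomeo openT open_image_idT (fun _ _ => erefl) (fun _ _ => erefl)
    (fun _ _ => I) (@within_continuous_id setT)
    (@within_continuous_id (id @` setT))
    (fun x nx => False_ind _ (nx I)).

End Restriction.

Section WayBelow.
Variable X : topologicalType.
Implicit Types (s t d : phomeo X) (D : set (phomeo X)).
Local Notation le := (@ple X).

Lemma is_sup_pdom_cover D s : (forall d, D d -> le d s) ->
  pdom s `<=` \bigcup_(d in D) pdom d -> is_sup le D s.
Proof.
move=> ubs covs; split=> // u ubu; split=> [x /covs [d Dd dx]|x /covs [d Dd dx]].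
  by have [+ _] := ubu d Dd; apply.
have [_ eds] := ubs d Dd; have [_ edu] := ubu d Dd.
by rewrite -eds // edu.
Qed.

Lemma is_sup_pdom_sub D s : is_sup le D s -> pdom s `<=` \bigcup_(d in D) pdom d.
Proof.
move=> [ubs least].
have oU : open (\bigcup_(d in D) pdom d) by apply: bigcup_open => d _; exact: pdom_open.
have [+ _] := least (res s oU) (fun d Dd => ple_res_sub oU (ubs d Dd) (bigcup_sup Dd)).
by move=> + x sx => /(_ x sx) [].
Qed.

Lemma way_below_ple t s : way_below le t s -> le t s.
Proof.
move=> wbts.
have dirs : directed le [set s].
  by split=> [|a b -> ->]; [exists s | exists s => //; split; exact: ple_refl].
have sups : is_sup le [set s] s.
  by apply: is_sup_pdom_cover => [d ->|x sx]; [exact: ple_refl | exists s].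
by have [d -> //] := wbts [set s] s dirs sups (ple_refl s).
Qed.

Lemma way_below_compactly_below t s :
  way_below le t s -> compactly_below (pdom t) (pdom s).
Proof.
move=> wbts W [[w0 Ww0] dirW] oW covs.
pose D := [set d | le d s /\ exists2 w, W w & pdom d = pdom s `&` w].
have resD w (Ww : W w) : D (res s (oW w Ww)) by split; [exact: ple_res | exists w].
have dirD : directed le D.
  split=> [|d1 d2 [d1s [w1 Ww1 d1E]] [d2s [w2 Ww2 d2E]]].
    by exists (res s (oW w0 Ww0)).
  have [w Ww [w1w w2w]] := dirW w1 w2 Ww1 Ww2.
  exists (res s (oW w Ww)) => //.
  by split; apply: ple_res_sub => // x; rewrite ?d1E ?d2E => -[_];
    [exact: w1w | exact: w2w].
have supD : is_sup le D s.
  apply: is_sup_pdom_cover => [d []//|x sx].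
  have [w Ww wx] := covs x sx.
  by exists (res s (oW w Ww)) => //; split.
have [d [_ [w Ww dE]] [td _]] := wbts D s dirD supD (ple_refl s).
by exists w => // x /td; rewrite dE => -[].
Qed.

Lemma compact_way_below t s (K : set X) : le t s -> compact K ->
  pdom t `<=` K -> K `<=` pdom s -> way_below le t s.
Proof.
move=> [ts ets] cK tK Ks D s' dirD supD [ss' ess'].
have [_ [d Dd <-] Kd] : exists2 w, [set pdom d | d in D] w & K `<=` w.
  apply: compact_compactly_below => // [|_ [d _ <-]|x /Ks /ss']; last first.
  - by move=> /(is_sup_pdom_sub supD) [d Dd dx]; exists (pdom d) => //; exists d.
  - exact: pdom_open.
  case: dirD => -[d Dd] dirD; split=> [|_ _ [a Da <-] [b Db <-]].
    by exists (pdom d), d.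
  have [c Dc [[ac _] [bc _]]] := dirD a b Da Db.
  by exists (pdom c) => //; exists c.
exists d => //; split=> [x /tK /Kd //|x tx].
have [_ eds'] := (proj1 supD) d Dd.
by rewrite ets // ess' ?eds' //; [exact/Kd/tK | exact: ts].
Qed.

End WayBelow.

Section LocallyCompactContinuous.
Variable X : topologicalType.
Hypotheses (hX : hausdorff_space X) (lcX : locally_compact [set: X]).
Implicit Types (s t : phomeo X).
Local Notation le := (@ple X).

Lemma way_below_compact_between t s : way_below le t s ->
  exists K, [/\ compact K, pdom t `<=` K & K `<=` pdom s].
Proof.
move=> /way_below_compactly_below.
exact: compactly_below_compact_between hX lcX (pdom_open s).
Qed.

Lemma way_below_pdom_cover s x : pdom s x -> exists2 t, way_below le t s & pdom t x.
Proof.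
move=> sx.
have [A [K [oA Ax cK AK Ks]]] :=
  locally_compact_open_nbhs_compact hX lcX (pdom_open s) sx.
exists (res s oA) => //.
by apply: (compact_way_below (ple_res s oA) cK) => // y [_ /AK].
Qed.

Lemma way_below_directed s : directed le [set t | way_below le t s].
Proof.
split=> [|t1 t2 wb1 wb2].
  exists (res s open0); apply: (compact_way_below (ple_res s _) compact0) => //.
  by move=> x [].
have [K1 [cK1 t1K1 K1s]] := way_below_compact_between wb1.
have [K2 [cK2 t2K2 K2s]] := way_below_compact_between wb2.
have o12 := openU (pdom_open t1) (pdom_open t2).
exists (res s o12).
  apply: (compact_way_below (ple_res s o12) (compactU cK1 cK2)).
    by move=> x [_ [/t1K1|/t2K2]]; [left|right].
  by move=> x [/K1s|/K2s].
by split; apply: ple_res_sub;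
  [exact: way_below_ple | by left | exact: way_below_ple | by right].
Qed.

Lemma locally_compact_continuous_ple : continuous_poset le.
Proof.
move=> s; split; first exact: way_below_directed.
apply: is_sup_pdom_cover => [t|x /way_below_pdom_cover [t wbt tx]].
  exact: way_below_ple.
by exists t.
Qed.

End LocallyCompactContinuous.

Section ContinuousLocallyCompact.
Variable X : topologicalType.
Hypotheses (hX : hausdorff_space X) (contX : continuous_poset (@ple X)).

Lemma continuous_way_below_pdom_cover (s : phomeo X) x :
  pdom s x -> exists2 t, way_below (@ple X) t s & pdom t x.
Proof.
move=> sx; have [_ sups] := contX s.
by have [t wbt tx] := is_sup_pdom_sub sups sx; exists t.
Qed.

Lemma continuous_ple_locally_compact : locally_compact [set: X].
Proof.
move=> x _; rewrite withinET.
have [t0 /way_below_compactly_below cb0 t0x] :=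
  @continuous_way_below_pdom_cover (phomeo_id X) x I.
have [t1 /way_below_compactly_below cb1 t1x] :=
  continuous_way_below_pdom_cover t0x.
have cl1 := compactly_below_closure hX cb1.
exists (closure (pdom t1)).
  apply: filterS (@subset_closure _ _) _.
  by apply: open_nbhs_nbhs; split; [exact: pdom_open | exact: t1x].
split; last exact: closed_closure.
exact: closed_compactly_belowT cb0 (@closed_closure _ _) cl1.
Qed.

End ContinuousLocallyCompact.

Theorem corollary5p11 (X : topologicalType) (HX : hausdorff_space X) :
  locally_compact [set: X] <-> continuous_poset (@ple X).
Proof.
split; [exact: locally_compact_continuous_ple | exact: continuous_ple_locally_compact].
Qed.
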